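(* Let $T$ be a linear transformation of a finite-dimensional real vector space $W$, and assume $W$ splits as a direct sum of (real) eigenspaces of $T$ with eigenvalues $\neq\pm1$. Let $W^+\subseteq W$ be a subspace having zero intersection with the contracting subspace of $W$ determined by $T$, and fix a norm $\|\cdot\|$ on $W$. Then there is a constant $c<1$ depending only on $T$, and a constant $A$ depending only on $T$, $W^+$ and $\|\cdot\|$, such that for all $w^+\in W^+$ and all integers $0\leq j\leq k$, $$\|T^jw^+\|\leq A\,c^{k-j}\|T^kw^+\|.$$
   Context: The contracting subspace of $W$ determined by $T$ is the sum of the eigenspaces of $T$ whose eigenvalues have absolute value $<1$. *)

(* W = 'rV[R]_n (row vectors), T acts by v |-> v *m T. *)
From HB Require Import structures.
From mathcomp Require Import all_boot all_order all_algebra.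
From mathcomp Require Import reals.
Set Implicit Arguments. Unset Strict Implicit. Unset Printing Implicit Defensive.
Import Order.TTheory GRing.Theory Num.Theory.
Local Open Scope ring_scope.

Definition is_norm (R : realType) (n : nat) (N : 'rV[R]_n -> R) : Prop :=
  [/\ (forall v, N v = 0 -> v = 0),
      (forall (a : R) v, N (a *: v) = `|a| * N v) &
      (forall u v, N (u + v) <= N u + N v)].

Definition eigen_split (R : realType) (n : nat) (T : 'M[R]_n) (s : seq R) : Prop :=
  (\sum_(a <- s) eigenspace T a :=: 1%:M)%MS.

Definition in_contracting (R : realType) (n : nat) (T : 'M[R]_n) (v : 'rV[R]_n) : Prop :=
  exists s : seq R, all (fun a => `|a| < 1) s /\
    (v <= \sum_(a <- s) eigenspace T a)%MS.

From mathcomp Require Import all_boot all_order all_algebra.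
From mathcomp Require Import reals lra.
From mathcomp Require Import boolp classical_sets topology normedtype derive.
From mathcomp Require Import matrix_normedtype.
Import Order.TTheory GRing.Theory Num.Theory.
Import numFieldNormedType.Exports.
Set Implicit Arguments. Unset Strict Implicit. Unset Printing Implicit Defensive.
Local Open Scope ring_scope.

(* Split w along the eigenprojectors P_a of T and measure it by the equivalent norm
   S x = sum_a N (x P_a), so that S (w T^i) = sum_a |a|^i N (w P_a).  With c the largest
   1/|a| over the expanding eigenvalues, each expanding term obeys
   |a|^j N (w P_a) <= c^(k-j) |a|^k N (w P_a).  The contracting terms are controlled on W+
   by the expanding ones: sum_(|a|>1) N (x P_a) + N (x coker W+) vanishes only at 0, as W+
   meets the contracting subspace trivially, hence dominates any seminorm by equivalence
   of norms in finite dimension; and the expanding part of w is at most c^k S (w T^k). *)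

Lemma sum_expn_le_rate (R : numDomainType) (r : seq R) (P : pred R) (g : R -> R)
    (c : R) (i k : nat) :
  0 <= c -> (i <= k)%N -> (forall a, a \in r -> P a -> 1 <= c * `|a|) ->
  (forall a, 0 <= g a) ->
  \sum_(a <- r | P a) `|a| ^+ i * g a <= c ^+ (k - i) * \sum_(a <- r | P a) `|a| ^+ k * g a.
Proof.
move=> c0 ik c_rate g0; rewrite mulr_sumr big_seq_cond [leRHS]big_seq_cond.
apply: ler_sum => a /andP [ar Pa].
have -> : `|a| ^+ k = `|a| ^+ (k - i) * `|a| ^+ i by rewrite -exprD subnK.
rewrite !mulrA -exprMn -mulrA.
by apply: ler_peMl; [rewrite mulr_ge0 ?exprn_ge0 | rewrite exprn_ege1 ?c_rate].
Qed.

Lemma exists_expansion_rate (R : realFieldType) (s : seq R) :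
  exists c : R, [/\ 0 <= c, c < 1 & forall a, a \in s -> 1 < `|a| -> 1 <= c * `|a|].
Proof.
elim: s => [|a s [c [c0 c1 c_rate]]]; first by exists 0; split.
have [a1|a1] := ltP 1 `|a|; last first.
  exists c; split=> // b; rewrite inE => /orP [/eqP->|]; last exact: c_rate.
  by rewrite ltNge a1.
have a0 : 0 < `|a| by apply: lt_trans a1.
exists (Num.max c `|a|^-1); split; first by rewrite le_max c0.
  by rewrite gt_max c1 invf_lt1.
move=> b; rewrite inE => /orP [/eqP-> _|bs b1].
  by rewrite -ler_pdivrMr // div1r le_max lexx orbT.
apply: le_trans (c_rate b bs b1) _; apply: ler_wpM2r; first exact: normr_ge0.
by rewrite le_max lexx.
Qed.

Section Seminorm.
Variables (R : realType) (n : nat).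
Implicit Types (f g : 'rV[R]_n -> R) (u v : 'rV[R]_n).

Definition seminorm f : Prop :=
  (forall (a : R) v, f (a *: v) = `|a| * f v) /\ (forall u v, f (u + v) <= f u + f v).

Lemma norm_seminorm f : is_norm f -> seminorm f.
Proof. by case. Qed.

Lemma seminorm0 f : seminorm f -> f 0 = 0.
Proof. by case=> fZ _; rewrite -(scale0r 0) fZ normr0 mul0r. Qed.

Lemma seminormN f v : seminorm f -> f (- v) = f v.
Proof. by case=> fZ _; rewrite -scaleN1r fZ normrN normr1 mul1r. Qed.

Lemma seminorm_ge0 f v : seminorm f -> 0 <= f v.
Proof.
by move=> hf; have := hf.2 v (- v); rewrite subrr seminorm0 // seminormN //; lra.
Qed.

Lemma ler_seminorm_sum f I (r : seq I) (P : pred I) (F : I -> 'rV[R]_n) :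
  seminorm f -> f (\sum_(i <- r | P i) F i) <= \sum_(i <- r | P i) f (F i).
Proof.
move=> hf; elim/big_rec2: _ => [|i y1 y2 _ h]; first by rewrite seminorm0.
by apply: le_trans (hf.2 _ _) _; rewrite lerD2l.
Qed.

Lemma seminorm_mulmx f (M : 'M[R]_n) : seminorm f -> seminorm (fun v => f (v *m M)).
Proof.
by case=> fZ fD; split=> [a v|u v]; rewrite ?mulmxDl -?scalemxAl.
Qed.

Lemma seminormD f g : seminorm f -> seminorm g -> seminorm (fun v => f v + g v).
Proof.
case=> fZ fD [gZ gD]; split=> [a v|u v]; first by rewrite fZ gZ mulrDr.
by rewrite addrACA lerD.
Qed.

Lemma seminorm_sum I (r : seq I) (P : pred I) (F : I -> 'rV[R]_n -> R) :
  (forall i, seminorm (F i)) -> seminorm (fun v => \sum_(i <- r | P i) F i v).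
Proof.
move=> hF; split=> [a v|u v].
  by rewrite mulr_sumr; apply: eq_bigr => i _; rewrite (hF i).1.
by rewrite -big_split; apply: ler_sum => i _; rewrite (hF i).2.
Qed.

Lemma seminorm_le_mx_norm f : seminorm f ->
  exists2 M, 0 <= M & forall v, f v <= M * `|v|.
Proof.
move=> hf; exists (\sum_(j < n) f 'e_j).
  by apply: sumr_ge0 => j _; apply: seminorm_ge0.
move=> v; rewrite {1}(row_sum_delta v); apply: le_trans (ler_seminorm_sum _ _ _ hf) _.
rewrite mulr_suml; apply: ler_sum => j _; rewrite hf.1 mulrC.
apply: ler_wpM2l; first exact: seminorm_ge0.
by rewrite [leRHS]/Num.norm /= mx_normrE; apply/bigmax_geP; right; exists (0, j).
Qed.

Lemma seminorm_continuous f : seminorm f -> continuous f.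
Proof.
move=> hf; have [M M0 hM] := seminorm_le_mx_norm hf.
have lip u v : `|f u - f v| <= (M + 1) * `|u - v|.
  apply: le_trans (_ : f (u - v) <= _).
    have := hf.2 (u - v) v; have := hf.2 (v - u) u.
    rewrite !subrK -opprB seminormN // => h1 h2.
    by rewrite ler_norml; apply/andP; split; lra.
  by apply: le_trans (hM _) _; apply: ler_wpM2r => //; rewrite lerDl.
move=> u; apply/(@cvgrPdist_lt _ _ _ (nbhs u) (nbhs_filter u)) => e e0.
have d0 : 0 < e / (M + 1) by rewrite divr_gt0 // ltr_wpDl.
apply: filterS (nbhsx_ballx u _ d0) => v; rewrite -ball_normE /= => uv.
by apply: le_lt_trans (lip _ _) _; rewrite mulrC -ltr_pdivlMr ?ltr_wpDl.
Qed.

Lemma mx_norm_le_definite_seminorm f : seminorm f -> (forall v, f v = 0 -> v = 0) ->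
  exists2 m, 0 < m & forall v, `|v| <= m * f v.
Proof.
move=> hf fdef.
have [[v1 v1_neq0]|] := pselect (exists v : 'rV[R]_n, v != 0); last first.
  move=> /forallNP all0; exists 1 => // v.
  by have /negP/negbNE/eqP-> := all0 v; rewrite normr0 seminorm0 // mulr0.
pose S := [set v : 'rV[R]_n | `|v| = 1]%classic.
have normalize v : v != 0 -> `|v|^-1 *: v \in S.
  by move=> v_neq0; rewrite inE /S /= normrZ normfV normr_id mulVf ?normr_eq0.
have cS : compact S.
  apply: bounded_closed_compact.
    by exists 1; split; [exact: num_real | move=> M M1 x /= ->; apply: ltW].
  have -> : S = (Num.norm @^-1` [set x : R | x = 1])%classic by [].
  apply: preimage_closed; last exact: closed_eq.
  by move=> x _; apply: norm_continuous.
have [c cS' hc] := EVT_min_rV (ex_intro _ _ (set_mem (normalize v1 v1_neq0))) cS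
  (continuous_subspaceT (seminorm_continuous hf)).
have fc0 : 0 < f c.
  rewrite lt_def seminorm_ge0 // andbT; apply/eqP => /fdef c0.
  by move: cS'; rewrite inE /S /= c0 normr0 => /eqP; rewrite eq_sym oner_eq0.
exists (f c)^-1; first by rewrite invr_gt0.
move=> v; have [->|v_neq0] := eqVneq v 0; first by rewrite normr0 seminorm0 // mulr0.
have := hc _ (normalize v v_neq0); rewrite hf.1 normfV normr_id.
by rewrite ler_pdivlMl ?normr_gt0 // mulrC ler_pdivlMl.
Qed.

Lemma seminorm_le_definite f g : seminorm f -> (forall v, f v = 0 -> v = 0) ->
  seminorm g -> exists2 B, 0 <= B & forall v, g v <= B * f v.
Proof.
move=> hf fdef hg; have [M M0 hM] := seminorm_le_mx_norm hg.
have [m m0 hm] := mx_norm_le_definite_seminorm hf fdef.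
exists (M * m) => [|v]; first by rewrite mulr_ge0 // ltW.
by apply: le_trans (hM v) _; rewrite -mulrA ler_wpM2l.
Qed.

End Seminorm.

Section Eigenprojector.
Variables (F : fieldType) (n : nat) (T : 'M[F]_n) (s : seq F).
Hypothesis T_split : (\sum_(a <- s) eigenspace T a :=: 1%:M)%MS.

(* Lagrange interpolation: the polynomial in T equal to 1 at a and to 0 at the other
   eigenvalues; repetitions in s do not matter. *)
Definition eigenproj (a : F) : 'M[F]_n :=
  \prod_(b <- s | b != a) ((a - b)^-1 *: (T - b%:M)).

Lemma eigenspace_mulX c (v : 'rV[F]_n) k :
  (v <= eigenspace T c)%MS -> v *m T ^+ k = c ^+ k *: v.
Proof.
move=> /eigenspaceP vT; elim: k => [|k IH]; first by rewrite !expr0 mulmx1 scale1r.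
by rewrite exprSr -mulmxE mulmxA IH -scalemxAl vT scalerA -exprSr.
Qed.

Lemma eigenvector_eigenproj a c (v : 'rV[F]_n) :
  c \in s -> (v <= eigenspace T c)%MS ->
  v *m eigenproj a = if c == a then v else 0.
Proof.
move=> cs vc; have /eigenspaceP vT := vc.
have -> : v *m eigenproj a = (\prod_(b <- s | b != a) ((a - b)^-1 * (c - b))) *: v.
  rewrite /eigenproj; elim/big_rec2: _ => [|b x M _ IH]; first by rewrite scale1r mulmx1.
  rewrite -mulmxE mulmxA -scalemxAr mulmxBr vT mul_mx_scalar -scalerBl scalerA.
  by rewrite -scalemxAl IH scalerA mulrC.
case: eqP => [->|ca].
  rewrite big1_seq ?scale1r // => b /andP [ba _].
  by rewrite mulVf // subr_eq0 eq_sym.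
suff -> : \prod_(b <- s | b != a) ((a - b)^-1 * (c - b)) = 0 by rewrite scale0r.
apply/eqP; rewrite prodf_seq_eq0; apply/hasP; exists c => //.
by rewrite subrr mulr0 eqxx andbT; apply/eqP.
Qed.

Lemma eq_on_sum_eigenspaces (r : seq F) (M1 M2 : 'M[F]_n) :
  (forall a (v : 'rV_n), a \in r -> (v <= eigenspace T a)%MS -> v *m M1 = v *m M2) ->
  forall v : 'rV_n, (v <= \sum_(a <- r) eigenspace T a)%MS -> v *m M1 = v *m M2.
Proof.
elim: r => [|a r IH] eqM v; first by rewrite big_nil submx0 => /eqP->; rewrite !mul0mx.
rewrite big_cons => /sub_addsmxP [[v1 v2] /= ->].
rewrite !mulmxDl (eqM a) ?mem_head ?submxMl //; congr (_ + _).
by apply: IH; [move=> b w br; apply: eqM; rewrite inE br orbT | exact: submxMl].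
Qed.

Lemma eq_mx_on_eigenspaces (M1 M2 : 'M[F]_n) :
  (forall a (v : 'rV_n), a \in s -> (v <= eigenspace T a)%MS -> v *m M1 = v *m M2) ->
  M1 = M2.
Proof.
move=> eqM; apply/row_matrixP => i; rewrite -[M1]mul1mx -[M2]mul1mx !row_mul.
by apply: eq_on_sum_eigenspaces eqM _ _; rewrite T_split submx1.
Qed.

Lemma eigenproj_mulXl a k : T ^+ k *m eigenproj a = a ^+ k *: eigenproj a.
Proof.
apply: eq_mx_on_eigenspaces => c v cs vc.
rewrite mulmxA (eigenspace_mulX _ vc) -!scalemxAl -scalemxAr.
rewrite (eigenvector_eigenproj _ cs vc).
by case: eqP => [->|_]; rewrite ?scaler0.
Qed.

Lemma eigenproj_sub_eigenspace a (x : 'rV[F]_n) :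
  (x *m eigenproj a <= eigenspace T a)%MS.
Proof.
suff PT : eigenproj a *m T = a *: eigenproj a.
  by apply/eigenspaceP; rewrite -mulmxA PT scalemxAr.
apply: eq_mx_on_eigenspaces => c v cs vc.
rewrite mulmxA -scalemxAr (eigenvector_eigenproj _ cs vc).
case: eqP => [<-|_]; last by rewrite mul0mx scaler0.
exact/eigenspaceP.
Qed.

Lemma sum_eigenproj : \sum_(a <- undup s) eigenproj a = 1%:M.
Proof.
apply: eq_mx_on_eigenspaces => c v cs vc; have cu : c \in undup s by rewrite mem_undup.
rewrite mulmx_sumr mulmx1 (bigD1_seq c cu (undup_uniq s)) /=.
rewrite (eigenvector_eigenproj _ cs vc).
rewrite eqxx big1_seq ?addr0 // => a /andP [ac _].
by rewrite (eigenvector_eigenproj _ cs vc) eq_sym (negbTE ac).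
Qed.

End Eigenprojector.

Lemma in_contracting_eigenproj (R : realType) n (T : 'M[R]_n) (s : seq R)
    (x : 'rV[R]_n) :
  eigen_split T s ->
  (forall a, a \in undup s -> ~~ (`|a| < 1) -> x *m eigenproj T s a = 0) ->
  in_contracting T x.
Proof.
move=> T_split x_exp0.
have -> : x = \sum_(a <- undup s | `|a| < 1) x *m eigenproj T s a.
  rewrite -[LHS]mulmx1 -(sum_eigenproj T_split) mulmx_sumr.
  rewrite (bigID (fun a => `|a| < 1)) /= [X in _ + X]big1_seq ?addr0 // => a /andP [].
  by move=> a_exp au; apply: x_exp0.
exists [seq a <- undup s | `|a| < 1]; split; first exact: filter_all.
rewrite big_filter; elim/big_rec2: _ => [|a y1 y2 _ y21]; first exact: sub0mx.
by apply: addmx_sub_adds => //; apply: eigenproj_sub_eigenspace.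
Qed.


Section ContractionEstimate.
Variables (R : realType) (n : nat) (T : 'M[R]_n) (s : seq R) (N : 'rV[R]_n -> R).
Variables (Wp : 'M[R]_n) (c : R).
Hypotheses (T_split : eigen_split T s) (N_norm : is_norm N).
Hypothesis Wp_contracting :
  forall v : 'rV[R]_n, (v <= Wp)%MS -> in_contracting T v -> v = 0.
Hypotheses (c_ge0 : 0 <= c) (c_le1 : c <= 1).
Hypothesis c_rate : forall a, a \in undup s -> ~~ (`|a| < 1) -> 1 <= c * `|a|.

Let P := eigenproj T s.
Let N_seminorm := norm_seminorm N_norm.
Let N_ge0 x : 0 <= N x := seminorm_ge0 x N_seminorm.
Let N_definite x : N x = 0 -> x = 0 := let: And3 N0 _ _ := N_norm in N0 x.

Definition eigennorm (x : 'rV[R]_n) := \sum_(a <- undup s) N (x *m P a).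

Lemma norm_le_eigennorm x : N x <= eigennorm x.
Proof.
rewrite -{1}[x]mulmx1 -(sum_eigenproj T_split) mulmx_sumr.
exact: ler_seminorm_sum.
Qed.

Lemma eigennorm_le_norm : exists2 K, 0 <= K & forall x, eigennorm x <= K * N x.
Proof.
apply: seminorm_le_definite N_seminorm N_definite _.
by apply: seminorm_sum => a; apply: seminorm_mulmx.
Qed.

Lemma eigennorm_mulX w i :
  eigennorm (w *m T ^+ i) = \sum_(a <- undup s) `|a| ^+ i * N (w *m P a).
Proof.
apply: eq_bigr => a _.
by rewrite -mulmxA (eigenproj_mulXl T_split) -scalemxAr N_seminorm.1 normrX.
Qed.

Lemma contracting_le_expanding : exists2 B, 0 <= B & forall w, (w <= Wp)%MS ->
  \sum_(a <- undup s | `|a| < 1) N (w *m P a) <=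
  B * \sum_(a <- undup s | ~~ (`|a| < 1)) N (w *m P a).
Proof.
pose f x := \sum_(a <- undup s | ~~ (`|a| < 1)) N (x *m P a) + N (x *m cokermx Wp).
have f_seminorm : seminorm f.
  apply: seminormD; last exact: seminorm_mulmx.
  by apply: seminorm_sum => a; apply: seminorm_mulmx.
have f_definite x : f x = 0 -> x = 0.
  move/eqP; rewrite paddr_eq0 ?sumr_ge0 // => /andP [/eqP exp0 /eqP coker0].
  apply: Wp_contracting; first by rewrite submxE (N_definite coker0).
  apply: in_contracting_eigenproj T_split _ => a au a_exp; apply: N_definite.
  by move: exp0 => /eqP; rewrite psumr_eq0 // => /allP /(_ a au) /implyP /(_ a_exp) /eqP.
have g_seminorm : seminorm (fun x => \sum_(a <- undup s | `|a| < 1) N (x *m P a)).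
  by apply: seminorm_sum => a; apply: seminorm_mulmx.
have [B B0 hB] := seminorm_le_definite f_seminorm f_definite g_seminorm.
exists B => // w w_Wp; apply: le_trans (hB w) _.
by rewrite /f; move: w_Wp; rewrite submxE => /eqP->; rewrite seminorm0 // addr0.
Qed.

Lemma contraction_estimate : exists A, forall (w : 'rV[R]_n) (j k : nat),
  (w <= Wp)%MS -> (j <= k)%N -> N (w *m T ^+ j) <= A * c ^+ (k - j) * N (w *m T ^+ k).
Proof.
have [K K0 hK] := eigennorm_le_norm.
have [B B0 hB] := contracting_le_expanding.
exists ((1 + B) * K) => w j k w_Wp jk.
pose G a := N (w *m P a).
pose X := \sum_(a <- undup s | ~~ (`|a| < 1)) `|a| ^+ k * G a.
have X_ge0 : 0 <= X by apply: sumr_ge0 => a _; rewrite mulr_ge0 ?exprn_ge0 ?N_ge0.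
have X_le : X <= K * N (w *m T ^+ k).
  apply: le_trans (hK _); rewrite eigennorm_mulX (bigID (fun a => `|a| < 1)) /= lerDr.
  by apply: sumr_ge0 => a _; rewrite mulr_ge0 ?exprn_ge0.
have expanding_le i : (i <= k)%N ->
    \sum_(a <- undup s | ~~ (`|a| < 1)) `|a| ^+ i * G a <= c ^+ (k - i) * X.
  by move=> ik; apply: sum_expn_le_rate c_ge0 ik c_rate (fun a => N_ge0 _).
have contracting_le :
    \sum_(a <- undup s | `|a| < 1) `|a| ^+ j * G a <= B * (c ^+ (k - j) * X).
  apply: (@le_trans _ _ (\sum_(a <- undup s | `|a| < 1) G a)).
    apply: ler_sum => a a1.
    exact: ler_piMl (N_ge0 _) (exprn_ile1 _ (normr_ge0 a) (ltW a1)).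
  apply: le_trans (hB w w_Wp) _; apply: ler_wpM2l => //.
  have := expanding_le 0%N (leq0n k); under eq_bigr do rewrite expr0 mul1r.
  by move/le_trans; apply; rewrite subn0 ler_wpM2r ?ler_wiXn2l ?leq_subr.
apply: le_trans (norm_le_eigennorm _) _.
rewrite eigennorm_mulX (bigID (fun a => `|a| < 1)) /=.
apply: le_trans (lerD contracting_le (expanding_le j jk)) _.
rewrite -{2}[c ^+ (k - j) * X]mul1r -mulrDl addrC -!mulrA ler_wpM2l ?addr_ge0 //.
by rewrite mulrCA ler_wpM2l ?exprn_ge0.
Qed.

End ContractionEstimate.

Theorem lemma8p3 (R : realType) (n : nat) (T : 'M[R]_n)
  (hsplit : exists s : seq R,
      all (fun a => (a != 1) && (a != -1)) s /\ eigen_split T s) :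
  exists c : R, 0 <= c /\ c < 1 /\
    forall (Wp : 'M[R]_n) (N : 'rV[R]_n -> R),
      is_norm N ->
      (forall v : 'rV[R]_n, (v <= Wp)%MS -> in_contracting T v -> v = 0) ->
      exists A : R,
        forall (w : 'rV[R]_n) (j k : nat), (w <= Wp)%MS -> (j <= k)%N ->
          N (w *m T ^+ j) <= A * c ^+ (k - j) * N (w *m T ^+ k).
Proof.
case: hsplit => s [s_neq1 T_split].
have [c [c0 c1 c_rate]] := exists_expansion_rate s.
exists c; split=> //; split=> // Wp N N_norm Wp_contracting.
apply: contraction_estimate T_split N_norm Wp_contracting c0 (ltW c1) _.
move=> a; rewrite mem_undup => a_s a_exp; apply: c_rate => //.
have /andP [a_neq1 a_neqN1] := allP s_neq1 a a_s.
by rewrite lt_neqAle leNgt a_exp andbT eq_sym eqr_norml (negbTE a_neq1) (negbTE a_neqN1).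
Qed.
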